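(* Consider a graph orientation instance whose graph $G=(V,E)$ is a star with center $v$ and leaf set $H_v=V\setminus\{v\}$, with arbitrary query costs. Let $L$ be the algorithm that queries $v$ and then queries every leaf that is mandatory, and $R$ the algorithm that queries all leaves and then queries $v$ if it is mandatory; so $\mathbb E[L]=c_v+\sum_{u\in H_v}p_uc_u$ and $\mathbb E[R]=p_vc_v+c(H_v)$. If $\mathbb E[L]=\mathbb E[R]$, then $\mathbb E[L]\le\frac43\mathbb E[\mathrm{OPT}]$.
   Context: An instance of the graph orientation problem consists of a graph $G=(V,E)$ and, for each vertex $u$, a query cost $c_u\ge0$ and a continuous distribution $d_u$ with minimal support interval $I_u$; for each edge the two intervals intersect. Weights $w_u\sim d_u$ are independent and querying $u$ reveals $w_u$ at cost $c_u$; $c(S)=\sum_{u\in S}c_u$. For a realization, $Q$ is a feasible query set if knowing $w_u$ for $u\in Q$ and only the intervals for unqueried vertices suffices to identify, for every edge, its endpoint of minimum weight; $\mathbb E[\mathrm{OPT}]$ is the expected minimum cost of a feasible query set. A vertex is mandatory for a realization if it belongs to every feasible query set; $p_u$ is the probability that $u$ is mandatory. (In a star, the center $v$ is mandatory iff $w_u\in I_v$ for some leaf $u$, and a leaf $u$ is mandatory iff $w_v\in I_u$.) *)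

From HB Require Import structures.
From mathcomp Require Import all_boot all_order all_algebra.
From mathcomp Require Import all_classical all_reals all_analysis.
Set Implicit Arguments. Unset Strict Implicit. Unset Printing Implicit Defensive.
Import Order.TTheory GRing.Theory Num.Theory.
Local Open Scope classical_set_scope.
Local Open Scope ring_scope.

Section GraphOrientation.
Variables (R : realType) (V : finType).

Definition oint (a b : \bar R) : set R := [set x | (a < x%:E < b)%E].

Definition consistent (I : V -> set R) (w : V -> R) (Q : {set V}) (w' : V -> R) :=
  forall u, (u \in Q -> w' u = w u) /\ (u \notin Q -> I u (w' u)).

(* The endpoint of minimum weight of edge {x,y} is identified: some endpoint
   has weight <= the other one in every consistent weight vector. *)
Definition edge_determined I w Q (x y : V) :=
  exists z, (z = x \/ z = y) /\
    forall w', consistent I w Q w' -> w' z <= w' x /\ w' z <= w' y.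

Definition feasible (E : rel V) I w Q :=
  forall x y, E x y -> edge_determined I w Q x y.

Definition qcost (c : V -> R) (Q : {set V}) : R := \sum_(u in Q) c u.

(* minimum cost of a feasible query set (setT is always feasible). *)
Definition opt (E : rel V) I (c : V -> R) w : R :=
  \big[Num.min/qcost c [set: V]%SET]_(Q : {set V} | `[< feasible E I w Q >]) qcost c Q.

Definition mandatory (E : rel V) I w (u : V) :=
  forall Q, feasible E I w Q -> u \in Q.

Definition star (v : V) : rel V :=
  fun x y => ((x == v) && (y != v)) || ((y == v) && (x != v)).

End GraphOrientation.

Section Prob.
Variables (R : realType) (d : measure_display) (T : measurableType d)
  (P : probability T R) (V : finType).
Local Open Scope ereal_scope.

Definition mutually_independent (W : V -> T -> R) :=
  forall B : V -> set R, (forall u, measurable (B u)) ->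
    P (\bigcap_(u in [set: V]) (W u @^-1` B u)) = \prod_(u : V) P (W u @^-1` B u).

Definition atomless (X : T -> R) := forall x : R, P (X @^-1` [set x]) = 0.

(* oint a b is the (open) minimal support interval of the law of X:
   a = ess inf X, b = ess sup X. *)
Definition min_support_interval (X : T -> R) (a b : \bar R) :=
  a < b /\ P (X @^-1` oint a b) = 1 /\
  forall x : R, a < x%:E < b ->
    0 < P (X @^-1` [set y | y < x]%R) /\ 0 < P (X @^-1` [set y | x < y]%R).

Definition pmand (E : rel V) (I : V -> set R) (W : V -> T -> R) (u : V) :=
  P [set t | mandatory E I (fun x => W x t) u].

Definition EOPT (E : rel V) I (c : V -> R) (W : V -> T -> R) :=
  \int[P]_t (opt E I c (fun x => W x t))%:E.
End Prob.

(* When every leaf interval meets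
      the center interval, leaf u is mandatory iff w_v lies in I_u, the center
      is mandatory iff some leaf weight lies in I_v, and a feasible set either
      contains v and every mandatory leaf, or every leaf and v when mandatory.
      Hence OPT >= min(c_v + s, c(H_v) + m c_v) pointwise, where m indicates
      that v is mandatory and s is the cost of the mandatory leaves.
   2. A certificate (section AffineMinorant): nonnegative k, g, be, de with
      k + g m + be s + de m s below that minimum, chosen according to whether
      c_v <= c(H_v) or not; under the balance condition its value at
      (m, s, m s) = (p_v, E[s], p_v E[s]) is at least 3/4 E[L].
   3. Integration (section BalancedStar).  m depends only on the leaf weights
      and each leaf indicator only on w_v, so independence gives
      E[m s] = p_v E[s]; integrating the certificate bounds E[OPT] below. *)

From HB Require Import structures.
From mathcomp Require Import all_boot all_order all_algebra.
From mathcomp Require Import all_classical all_reals all_analysis.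
From mathcomp Require Import lra ring measurable_realfun.
Set Implicit Arguments. Unset Strict Implicit. Unset Printing Implicit Defensive.
Import Order.TTheory GRing.Theory Num.Theory.
Local Open Scope classical_set_scope.
Local Open Scope ring_scope.

Section OpenInterval.
Context {R : realType}.
Implicit Types (a b : \bar R) (x y z : R).

Lemma oint_nonempty a b : (a < b)%E -> exists x, oint a b x.
Proof.
case: a => [r| |]; case: b => [s| |] //= ab.
- exists ((r + s) / 2); rewrite /oint /= !lte_fin.
  rewrite lte_fin in ab; apply/andP; split; lra.
- by exists (r + 1); rewrite /oint /= ltry lte_fin andbT; lra.
- by exists (s - 1); rewrite /oint /= ltNyr lte_fin; lra.
- by exists 0; rewrite /oint /= ltNyr ltry.
Qed.

Lemma oint_convex a b x y z : oint a b x -> oint a b y -> x <= z <= y -> oint a b z.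
Proof.
rewrite /oint /= => /andP[ax xb] /andP[ay yb] /andP[xz zy].
by rewrite (lt_le_trans ax) ?lee_fin // (le_lt_trans _ yb) ?lee_fin.
Qed.

Lemma oint_above a b x : oint a b x -> exists y, oint a b y /\ x < y.
Proof.
move=> hx; move: (hx); rewrite /oint /= => /andP[ax xb].
case: b xb hx => [r| |] // xb hx.
- have xr : x < r by rewrite -lte_fin.
  exists ((x + r) / 2); split; last by lra.
  by rewrite /oint /= (lt_trans ax) ?lte_fin /=; lra.
- exists (x + 1); split; last by lra.
  by rewrite /oint /= ltry andbT (lt_trans ax) // lte_fin; lra.
Qed.

Lemma oint_below a b x : oint a b x -> exists y, oint a b y /\ y < x.
Proof.
move=> hx; move: (hx); rewrite /oint /= => /andP[ax xb].
case: a ax hx => [r| |] // ax hx.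
- have rx : r < x by rewrite -lte_fin.
  exists ((x + r) / 2); split; last by lra.
  by rewrite /oint /= (lt_trans _ xb) ?lte_fin //=; lra.
- exists (x - 1); split; last by lra.
  by rewrite /oint /= ltNyr /= (lt_trans _ xb) // lte_fin; lra.
Qed.

Lemma oint_outside a b x : ~ oint a b x -> (x%:E <= a)%E \/ (b <= x%:E)%E.
Proof.
by rewrite /oint /= => /negP; rewrite negb_and -!leNgt => /orP[]; [left|right].
Qed.

Lemma measurable_oint a b : measurable (oint a b).
Proof.
have -> : oint a b = EFin @^-1` [set` `]a, b[%O].
  by apply/seteqP; split => x; rewrite /oint /= in_itv.
have := @EFin_measurable R setT measurableT _ (emeasurable_itv `]a, b[%O).
by rewrite setTI.
Qed.

End OpenInterval.

Section Star.
Variables (R : realType) (V : finType) (v : V) (a b : V -> \bar R).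
Hypothesis nonempty_support : forall u, (a u < b u)%E.
Hypothesis leaf_overlap :
  forall u, u != v -> exists x, oint (a u) (b u) x /\ oint (a v) (b v) x.
Local Notation I := (fun u => oint (a u) (b u)).
Implicit Types (Q : {set V}) (x y u : V) (w : V -> R).

Definition interval_point u : R := xget 0 (I u).

Lemma interval_pointP u : I u (interval_point u).
Proof. by apply: xgetPex; apply: oint_nonempty. Qed.

Lemma edge_determined_sym w Q x y :
  edge_determined I w Q x y -> edge_determined I w Q y x.
Proof. by move=> [z [hz H]]; exists z; split; [tauto|move=> w' /H []]. Qed.

Lemma edge_determined_queried w Q x y :
  x \in Q -> y \in Q -> edge_determined I w Q x y.
Proof.
move=> xQ yQ; have [wxy|wyx] := lerP (w x) (w y).
- exists x; split; first by left.
  by move=> w' /[dup] /(_ x) [/(_ xQ) -> _] /(_ y) [/(_ yQ) -> _].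
- exists y; split; first by right.
  move=> w' /[dup] /(_ x) [/(_ xQ) -> _] /(_ y) [/(_ yQ) -> _].
  by split => //; apply: ltW.
Qed.

Lemma edge_determined_outside w Q x y :
  x \in Q -> ~ I y (w x) -> edge_determined I w Q x y.
Proof.
move=> xQ nI; have [yQ|yQ] := boolP (y \in Q); first exact: edge_determined_queried.
have wy w' : consistent I w Q w' -> w' x = w x /\ I y (w' y).
  by move=> /[dup] /(_ x) [/(_ xQ) -> _] /(_ y) [_ /(_ yQ)].
have [wa|bw] := oint_outside nI.
- exists x; split; first by left.
  move=> w' /wy [-> /andP[ay _]]; split => //.
  by apply: ltW; rewrite -lte_fin (le_lt_trans wa ay).
- exists y; split; first by right.
  move=> w' /wy [-> /andP[_ yb]]; split => //.
  by apply: ltW; rewrite -lte_fin (lt_le_trans yb bw).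
Qed.

Lemma not_edge_determined w Q x y w1 w2 :
  consistent I w Q w1 -> consistent I w Q w2 ->
  w1 y < w1 x -> w2 x < w2 y -> ~ edge_determined I w Q x y.
Proof.
move=> c1 c2 l1 l2 [z [[->|->] Hz]].
- by have [_] := Hz _ c1; rewrite leNgt l1.
- by have [+ _] := Hz _ c2; rewrite leNgt l2.
Qed.

Definition reassign w Q x y (x0 y0 : R) : V -> R := fun z =>
  if z == x then x0 else if z == y then y0
  else if z \in Q then w z else interval_point z.

Lemma consistent_reassign w Q x y (x0 y0 : R) :
  y \notin Q -> (x \in Q -> x0 = w x) -> (x \notin Q -> I x x0) -> I y y0 ->
  consistent I w Q (reassign w Q x y x0 y0).
Proof.
move=> yQ h1 h2 h3 z; rewrite /reassign; case: eqP => [->|zx]; first by split.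
case: eqP => [->|zy]; first by split => //; rewrite (negPf yQ).
by split => [->//|/negPf->]; exact: interval_pointP.
Qed.

Lemma reassign_first w Q x y (x0 y0 : R) : reassign w Q x y x0 y0 x = x0.
Proof. by rewrite /reassign eqxx. Qed.

Lemma reassign_second w Q x y (x0 y0 : R) :
  x != y -> reassign w Q x y x0 y0 y = y0.
Proof. by move=> xy; rewrite /reassign eq_sym (negPf xy) eqxx. Qed.

Lemma undetermined_overlap w Q x y s :
  x \notin Q -> y \notin Q -> x != y -> I x s -> I y s ->
  ~ edge_determined I w Q x y.
Proof.
move=> xQ yQ xy hxs hys.
have [t1 [ht1 st1]] := oint_above hxs; have [t2 [ht2 st2]] := oint_above hys.
have st : s < Num.min t1 t2 by rewrite lt_min st1.
have hxt : I x (Num.min t1 t2) by apply: (oint_convex hxs ht1); rewrite ltW // ge_min lexx.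
have hyt : I y (Num.min t1 t2).
  by apply: (oint_convex hys ht2); rewrite ltW // ge_min lexx orbT.
have cons (x0 y0 : R) : I x x0 -> I y y0 -> consistent I w Q (reassign w Q x y x0 y0).
  by move=> hx hy; apply: consistent_reassign => //; rewrite (negPf xQ).
by apply: (not_edge_determined (cons _ _ hxt hys) (cons _ _ hxs hyt));
  rewrite !reassign_first !reassign_second.
Qed.

Lemma undetermined_inside w Q x y :
  x \in Q -> y \notin Q -> I y (w x) -> ~ edge_determined I w Q x y.
Proof.
move=> xQ yQ hyw.
have xy : x != y by apply: contraNneq yQ => <-.
have [l [hl lw]] := oint_below hyw; have [h [hh wh]] := oint_above hyw.
have cons (y0 : R) : I y y0 -> consistent I w Q (reassign w Q x y (w x) y0).
  by move=> hy; apply: consistent_reassign => //; rewrite xQ.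
by apply: (not_edge_determined (cons _ hl) (cons _ hh));
  rewrite !reassign_first !reassign_second.
Qed.

Lemma undetermined_unqueried w Q x y :
  x != y -> y \notin Q -> (exists s, I x s /\ I y s) ->
  (x \in Q -> I y (w x)) -> ~ edge_determined I w Q x y.
Proof.
move=> xy yQ [s [hxs hys]] hin; have [xQ|xQ] := boolP (x \in Q).
- exact: undetermined_inside xQ yQ (hin xQ).
- exact: undetermined_overlap xQ yQ xy hxs hys.
Qed.

Lemma star_edge_center u : u != v -> star v v u.
Proof. by move=> uv; rewrite /star eqxx uv. Qed.

Lemma star_edge_leaf u : u != v -> star v u v.
Proof. by move=> uv; rewrite /star eqxx uv orbT. Qed.

Lemma star_feasible w Q :
  (forall u, u != v -> edge_determined I w Q v u) -> feasible (star v) I w Q.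
Proof.
move=> H x y; rewrite /star => /orP[]/andP[/eqP-> yv]; first exact: H.
exact/edge_determined_sym/H.
Qed.

(* Querying everything is feasible, so OPT is a minimum over a nonempty set. *)
Lemma star_feasible_all w : feasible (star v) I w [set: V].
Proof. by apply: star_feasible => u _; apply: edge_determined_queried; rewrite inE. Qed.

Lemma feasible_without_center w Q u :
  feasible (star v) I w Q -> v \notin Q -> u != v -> u \in Q.
Proof.
move=> fQ vQ uv; apply/contraT => uQ; exfalso.
have [s [hus hvs]] := leaf_overlap uv.
apply: (undetermined_unqueried _ uQ _ _ (fQ _ _ (star_edge_center uv))).
- by rewrite eq_sym.
- by exists s.
- by rewrite (negPf vQ).
Qed.

Lemma mandatory_leafP w u : u != v -> mandatory (star v) I w u <-> I u (w v).
Proof.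
move=> uv; have [s [hus hvs]] := leaf_overlap uv; split.
- move=> M; apply: contrapT => nI.
  have: u \in [set~ u]%SET; last by rewrite !inE eqxx.
  apply: M; apply: star_feasible => y yv; have [->|yu] := eqVneq y u.
    by apply: edge_determined_outside => //; rewrite !inE eq_sym.
  by apply: edge_determined_queried; rewrite !inE // eq_sym.
- move=> hI Q fQ; apply/contraT => uQ; exfalso.
  apply: (undetermined_unqueried _ uQ _ (fun _ => hI) (fQ _ _ (star_edge_center uv))).
  + by rewrite eq_sym.
  + by exists s.
Qed.

Lemma mandatory_centerP w :
  mandatory (star v) I w v <-> exists u, u != v /\ I v (w u).
Proof.
split.
- move=> M; apply: contrapT => nI.
  have: v \in [set~ v]%SET; last by rewrite !inE eqxx.
  apply: M; apply: star_feasible => u uv; apply/edge_determined_sym.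
  apply: edge_determined_outside; first by rewrite !inE.
  by move=> hI; apply: nI; exists u.
- move=> [u [uv hI]] Q fQ; apply/contraT => vQ; exfalso.
  have [s [hus hvs]] := leaf_overlap uv.
  apply: (undetermined_unqueried uv vQ _ (fun _ => hI) (fQ _ _ (star_edge_leaf uv))).
  by exists s.
Qed.

Variable c : V -> R.
Hypothesis cost_nonneg : forall u, 0 <= c u.

Definition is_mandatory w u : bool := `[< mandatory (star v) I w u >].

Definition mandatory_leaf_cost w : R :=
  \sum_(u | u != v) (is_mandatory w u)%:R * c u.

(* A feasible set either contains the center and all mandatory leaves, or
   all leaves and the center when it is mandatory. *)
Lemma feasible_cost_lower_bound w Q : feasible (star v) I w Q ->
  Num.min (c v + mandatory_leaf_cost w)
          (\sum_(u | u != v) c u + (is_mandatory w v)%:R * c v) <= qcost c Q.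
Proof.
move=> fQ; rewrite /qcost ge_min; have [vQ|vQ] := boolP (v \in Q).
- apply/orP; left; rewrite (bigD1 v vQ) /= lerD2l /mandatory_leaf_cost.
  rewrite big_mkcond [leRHS]big_mkcond /=; apply: ler_sum => u _.
  have [->|uv] := eqVneq u v; first by rewrite andbF.
  have [/asboolP M|_] := boolP (is_mandatory w u); last by rewrite mul0r; case: ifP.
  by rewrite mul1r ifT // andbT; exact: M _ fQ.
- have -> : is_mandatory w v = false.
    by apply/negP => /asboolP M; move: (M _ fQ); rewrite (negPf vQ).
  apply/orP; right; rewrite mul0r addr0 big_mkcond [leRHS]big_mkcond /=.
  apply: ler_sum => u _; have [->|uv] := eqVneq u v; first by case: ifP.
  by rewrite (feasible_without_center fQ vQ uv).
Qed.

Lemma opt_lower_bound w :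
  Num.min (c v + mandatory_leaf_cost w)
          (\sum_(u | u != v) c u + (is_mandatory w v)%:R * c v) <= opt (star v) I c w.
Proof.
rewrite /opt; apply: le_bigmin; first exact/feasible_cost_lower_bound/star_feasible_all.
by move=> Q /asboolP; apply: feasible_cost_lower_bound.
Qed.

End Star.

Section Integration.
Context d (T : measurableType d) (R : realType) (P : probability T R).

Lemma indic_ge0 (A : set T) (x : T) : 0 <= \1_A x :> R.
Proof. by rewrite indicE; case: (_ \in _). Qed.

Lemma integral_indic_combination (J : finType) (k : J -> R) (A : J -> set T) :
  (forall j, 0 <= k j) -> (forall j, measurable (A j)) ->
  (\int[P]_x (\sum_j k j * \1_(A j) x)%:E = \sum_j (k j)%:E * P (A j))%E.
Proof.
move=> k0 mA.
have mind j : measurable_fun setT (EFin \o (\1_(A j) : T -> R)).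
  by apply/measurable_EFinP; exact: measurable_indic.
under eq_integral do rewrite -sumEFin.
rewrite ge0_integral_sum //.
- apply: eq_bigr => j _; under eq_integral do rewrite EFinM.
  rewrite ge0_integralZl_EFin //; last exact: mind.
  by rewrite integral_indic // setIT.
- by move=> j; under eq_fun do rewrite EFinM; apply: measurable_funeM; exact: mind.
- by move=> j x _; rewrite lee_fin mulr_ge0 // indic_ge0.
Qed.

(* Monotonicity of the integral of nonnegative functions; no measurability is
   needed since such integrals are suprema over simple minorants. *)
Lemma le_integral_nonneg (f g : T -> \bar R) :
  (forall x, 0 <= f x)%E -> (forall x, f x <= g x)%E ->
  (\int[P]_x f x <= \int[P]_x g x)%E.
Proof.
move=> f0 fg; have g0 x : (0 <= g x)%E by apply: le_trans (fg x).
rewrite !ge0_integralTE //; apply: le_ereal_sup => _ [h hf <-]; exists h => //.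
by move=> x; apply: le_trans (fg x).
Qed.

Lemma probability_fine (A : set T) : measurable A -> P A = (fine (P A))%:E.
Proof.
move=> mA; rewrite fineK // ge0_fin_numE ?measure_ge0 //.
by rewrite (le_lt_trans (probability_le1 _ mA)) // ltry.
Qed.

Lemma probability_fine_bounds (A : set T) : measurable A -> 0 <= fine (P A) <= 1.
Proof. by move=> mA; rewrite -!lee_fin -probability_fine // measure_ge0 probability_le1. Qed.

End Integration.

Section AffineMinorant.
Variables (R : realFieldType) (A C : R).

(* Taking A = c(H_v),
   C = c_v, m = [the center is mandatory] and s = cost of mandatory leaves,
   the right-hand side is a pointwise lower bound on OPT. *)
Definition affine_minorant (k g be de : R) :=
  [/\ 0 <= k, 0 <= g, 0 <= be, 0 <= de &
      forall m s, (m = 0 \/ m = 1) -> 0 <= s <= A ->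
        k + g * m + be * s + de * m * s <= Num.min (C + s) (A + m * C)].

Lemma minorant_costly_center : 0 <= A <= C -> affine_minorant A (C - A) 0 1.
Proof.
move=> /andP[A0 AC]; split; rewrite ?subr_ge0 //.
by move=> m s [->|->] /andP[s0 sA]; rewrite le_min; apply/andP; split; lra.
Qed.

Lemma minorant_cheap_center :
  0 <= C < A -> affine_minorant C 0 ((A - C) / A) (C / A).
Proof.
move=> /andP[C0 CA]; have A0 : 0 < A by apply: le_lt_trans CA.
have be0 : 0 <= (A - C) / A by rewrite divr_ge0 // ?subr_ge0 ltW.
have de0 : 0 <= C / A by rewrite divr_ge0 // ltW.
have bede : (A - C) / A + C / A = 1 by rewrite -mulrDl subrK divff ?gt_eqF.
have beA : (A - C) / A * A = A - C by rewrite divfK ?gt_eqF.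
split => // m s hm /andP[s0 sA].
have le_s : (A - C) / A * s <= s by nra.
have le_gap : (A - C) / A * s <= A - C by rewrite -beA; nra.
have split_s : (A - C) / A * s + C / A * s = s by rewrite -mulrDl bede mul1r.
by rewrite le_min; apply/andP; case: hm => ->; split; nra.
Qed.

(* When E[L] = E[R], i.e. C + q = pv C + A, one of the two certificates
   integrates to at least 3/4 of E[L] = C + q. *)
Lemma balanced_star_minorant (pv q : R) :
  0 <= A -> 0 <= C -> 0 <= pv <= 1 -> 0 <= q -> C + q = pv * C + A ->
  exists k g be de, affine_minorant k g be de /\
    C + q <= 4 / 3 * (k + g * pv + be * q + de * pv * q).
Proof.
move=> A0 C0 /andP[pv0 pv1] q0 balanced.
have [AC|CA] := leP A C.
- exists A, (C - A), 0, 1; split; first by apply: minorant_costly_center; rewrite A0.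
  (* The value is A + pv^2 C, and q >= 0 means A >= (1 - pv) C, so
     4 (A + pv^2 C) - 3 (C + q) >= C (2 pv - 1)^2. *)
  have : 0 <= C * (2 * pv - 1) ^+ 2 by rewrite mulr_ge0 ?sqr_ge0.
  nra.
- exists C, 0, ((A - C) / A), (C / A).
  split; first by apply: minorant_cheap_center; rewrite C0.
  have A0' : 0 < A by apply: le_lt_trans CA.
  (* A times the integrated certificate simplifies to A C + q^2. *)
  have value : A * (C + 0 * pv + (A - C) / A * q + C / A * pv * q) = A * C + q ^+ 2.
    have -> : A * (C + 0 * pv + (A - C) / A * q + C / A * pv * q) =
              A * C + (A - C) * q + C * pv * q by field; rewrite gt_eqF.
    nra.
  (* Then 4 (A C + q^2) - 3 A (C + q) >= (2 q - A)^2 as C >= A - q. *)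
  set E := C + 0 * pv + _ + _ in value *.
  have leaf_bound : A - q <= C by nra.
  have square : 0 <= (2 * q - A) ^+ 2 by rewrite sqr_ge0.
  have : 3 * (C + q) * A <= 4 * (A * E) by rewrite value; nra.
  nra.
Qed.

End AffineMinorant.

Section BalancedStar.
Variables (R : realType) (d : measure_display) (T : measurableType d).
Variables (P : probability T R) (V : finType) (v : V).
Variables (W : V -> T -> R) (a b : V -> \bar R) (c : V -> R).
Hypothesis W_measurable : forall u, measurable_fun setT (W u).
Hypothesis W_independent : mutually_independent P W.
Hypothesis nonempty_support : forall u, (a u < b u)%E.
Hypothesis leaf_overlap :
  forall u, u != v -> exists x, oint (a u) (b u) x /\ oint (a v) (b v) x.
Hypothesis cost_nonneg : forall u, 0 <= c u.
Local Notation I := (fun u => oint (a u) (b u)).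
Local Notation weights t := (fun x => W x t).

(* Leaf u is mandatory exactly on this event, which only depends on W_v. *)
Definition leaf_event u : set T := W v @^-1` I u.

(* The center is mandatory exactly on this event, which only depends on the
   leaf weights. *)
Definition center_event : set T := [set t | exists u, u != v /\ I v (W u t)].

Lemma measurable_leaf_event u : measurable (leaf_event u).
Proof. by have := W_measurable v measurableT (measurable_oint (a u) (b u)); rewrite setTI. Qed.

Lemma measurable_center_event : measurable center_event.
Proof.
have -> : center_event = \bigcup_(u in [set u | u != v]) (W u @^-1` I v).
  by apply/seteqP; split => t /= [u]; [move=> [uv h]|move=> uv h]; exists u.
apply: fin_bigcup_measurable; first exact: finite_finset.
by move=> u _; have := W_measurable u measurableT (measurable_oint (a v) (b v)); rewrite setTI.
Qed.

Lemma indic_leaf_event u t : u != v ->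
  \1_(leaf_event u) t = (is_mandatory v a b (weights t) u)%:R :> R.
Proof.
move=> uv; have leafP := mandatory_leafP nonempty_support leaf_overlap (weights t) uv.
rewrite /indic /is_mandatory; congr ((nat_of_bool _)%:R).
by apply/idP/idP => [/set_mem/leafP/asboolP | /asboolP/leafP/mem_set].
Qed.

Lemma indic_center_event t :
  \1_center_event t = (is_mandatory v a b (weights t) v)%:R :> R.
Proof.
have centerP := mandatory_centerP nonempty_support leaf_overlap (weights t).
rewrite /indic /is_mandatory; congr ((nat_of_bool _)%:R).
by apply/idP/idP => [/set_mem/centerP/asboolP | /asboolP/centerP/mem_set].
Qed.

Lemma pmand_leaf u : u != v -> pmand P (star v) I W u = P (leaf_event u).
Proof.
move=> uv; rewrite /pmand; congr (P _); apply/seteqP; split => t;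
  by rewrite /leaf_event /= =>
    /(mandatory_leafP nonempty_support leaf_overlap (weights t) uv).
Qed.

Lemma pmand_center : pmand P (star v) I W v = P center_event.
Proof.
rewrite /pmand; congr (P _); apply/seteqP; split => t;
  by rewrite /center_event /= =>
    /(mandatory_centerP nonempty_support leaf_overlap (weights t)).
Qed.

(* By mutual independence, an event on W_v is independent of the leaf weights
   all avoiding I_v. *)
Lemma prob_center_complement (B : set R) : measurable B ->
  P (W v @^-1` B `&` ~` center_event) =
  (P (W v @^-1` B) * \prod_(x | x != v) P (W x @^-1` ~` I v))%E.
Proof.
move=> mB; pose D x := if x == v then B else ~` I v.
have mD x : measurable (D x).
  by rewrite /D; case: ifP => _ //; apply: measurableC; exact: measurable_oint.
have -> : W v @^-1` B `&` ~` center_event = \bigcap_(x in [set: V]) (W x @^-1` D x).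
  apply/seteqP; split => t /=.
  - move=> [hB nC] x _; rewrite /D; case: eqP => [->//|/eqP xv] hx.
    by apply: nC; exists x.
  - move=> H; split; first by move: (H v Logic.I); rewrite /D eqxx.
    by move=> [x [xv hx]]; move: (H x Logic.I); rewrite /D (negPf xv).
rewrite W_independent // (bigD1 v) //= /D eqxx; congr (_ * _)%E.
by apply: eq_bigr => x /negPf ->.
Qed.

Lemma leaf_not_center_independent u :
  P (leaf_event u `&` ~` center_event) = (P (leaf_event u) * P (~` center_event))%E.
Proof.
have -> : P (~` center_event) = (\prod_(x | x != v) P (W x @^-1` ~` I v))%E.
  by rewrite -[~` _]setTI -(preimage_setT (W v)) prob_center_complement //
    preimage_setT probability_setT mul1e.
exact: prob_center_complement (measurable_oint _ _).
Qed.

Lemma leaf_center_independent u :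
  fine (P (leaf_event u `&` center_event)) =
  fine (P (leaf_event u)) * fine (P center_event).
Proof.
have mL := measurable_leaf_event u; have mC := measurable_center_event.
have split_leaf : P (leaf_event u) =
    (P (leaf_event u `&` center_event) + P (leaf_event u `&` ~` center_event))%E.
  rewrite -measureU //; last 3 first.
  - exact: measurableI.
  - by apply: measurableI => //; apply: measurableC.
  - by rewrite setIACA setICr setI0.
  by rewrite -setIUr setUv setIT.
move: split_leaf; rewrite leaf_not_center_independent probability_setC //.
rewrite (probability_fine P mL) (probability_fine P mC)
  (probability_fine P (measurableI _ _ mL mC)).
by rewrite -EFinB -EFinM -EFinD /= => -[]; lra.
Qed.

(* Probability that the center is mandatory, and expected cost of the
   mandatory leaves. *)
Definition center_prob : R := fine (P center_event).
Definition leaf_mass : R := \sum_(u | u != v) fine (P (leaf_event u)) * c u.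

Lemma center_prob_bounds : 0 <= center_prob <= 1.
Proof. exact/probability_fine_bounds/measurable_center_event. Qed.

Lemma leaf_mass_ge0 : 0 <= leaf_mass.
Proof.
apply: sumr_ge0 => u _; rewrite mulr_ge0 //.
by case/andP: (probability_fine_bounds P (measurable_leaf_event u)).
Qed.

(* The certificate evaluated at m = 1_{center mandatory} and
   s = cost of the mandatory leaves. *)
Definition minorant_integrand (k g be de : R) (t : T) : R :=
  k + g * \1_center_event t
    + be * \sum_(u | u != v) \1_(leaf_event u) t * c u
    + de * \1_center_event t * \sum_(u | u != v) \1_(leaf_event u) t * c u.

Lemma minorant_integrand_le_opt k g be de t :
  affine_minorant (\sum_(u | u != v) c u) (c v) k g be de ->
  minorant_integrand k g be de t <= opt (star v) I c (weights t).
Proof.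
move=> [_ _ _ _ bound]; rewrite /minorant_integrand indic_center_event.
have -> : \sum_(u | u != v) \1_(leaf_event u) t * c u =
          mandatory_leaf_cost v a b c (weights t).
  by apply: eq_bigr => u uv; rewrite indic_leaf_event.
apply: le_trans (opt_lower_bound nonempty_support leaf_overlap cost_nonneg _).
apply: bound; first by case: is_mandatory; [right|left].
apply/andP; split; first by apply: sumr_ge0 => u _; apply: mulr_ge0.
by apply: ler_sum => u _; case: is_mandatory; rewrite ?mul1r ?mul0r.
Qed.

(* Index set, coefficients and events writing the integrand as a
   nonnegative combination of indicators. *)
Definition minorant_index := (bool + (V + V))%type.

Definition minorant_coef (k g be de : R) (j : minorant_index) : R :=
  match j with
  | inl true => k
  | inl false => g
  | inr (inl u) => if u != v then be * c u else 0
  | inr (inr u) => if u != v then de * c u else 0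
  end.

Definition minorant_event (j : minorant_index) : set T :=
  match j with
  | inl true => setT
  | inl false => center_event
  | inr (inl u) => leaf_event u
  | inr (inr u) => leaf_event u `&` center_event
  end.

Lemma minorant_coef_ge0 k g be de j :
  0 <= k -> 0 <= g -> 0 <= be -> 0 <= de -> 0 <= minorant_coef k g be de j.
Proof.
move=> k0 g0 be0 de0.
by case: j => [[]|[]u] //=; case: ifP => // _; apply: mulr_ge0.
Qed.

Lemma leaf_sum (x : R) (f : V -> R) :
  \sum_u (if u != v then x * c u else 0) * f u = x * \sum_(u | u != v) f u * c u.
Proof.
rewrite mulr_sumr [RHS]big_mkcond; apply: eq_bigr => u _.
by case: ifP => _; [ring | rewrite mul0r].
Qed.

Lemma sum_minorant_index k g be de (f : set T -> R) :
  \sum_(j : minorant_index) minorant_coef k g be de j * f (minorant_event j) =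
  k * f setT + g * f center_event
  + be * \sum_(u | u != v) f (leaf_event u) * c u
  + de * \sum_(u | u != v) f (leaf_event u `&` center_event) * c u.
Proof. by rewrite big_sumType big_bool big_sumType /= !leaf_sum addrA. Qed.

Lemma minorant_integrandE k g be de t :
  minorant_integrand k g be de t =
  \sum_(j : minorant_index) minorant_coef k g be de j * \1_(minorant_event j) t.
Proof.
rewrite (sum_minorant_index _ _ _ _ (fun A => \1_A t)) /minorant_integrand.
rewrite [\1_setT t]indicE in_setT mulr1 -[de * _ * _]mulrA.
congr (_ + de * _); rewrite mulr_sumr; apply: eq_bigr => u _.
by rewrite indicI /= mulrCA mulrA.
Qed.

(* Integrating the certificate: the m s term integrates to p_v E[s] by
   leaf_center_independent. *)
Lemma integral_minorant_integrand k g be de :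
  0 <= k -> 0 <= g -> 0 <= be -> 0 <= de ->
  (\int[P]_t (minorant_integrand k g be de t)%:E =
   (k + g * center_prob + be * leaf_mass + de * center_prob * leaf_mass)%:E)%E.
Proof.
move=> k0 g0 be0 de0.
have mE j : measurable (minorant_event j).
  case: j => [[]|[]u] /=.
  - exact: measurableT.
  - exact: measurable_center_event.
  - exact: measurable_leaf_event.
  - exact: measurableI (measurable_leaf_event u) measurable_center_event.
under eq_integral do rewrite minorant_integrandE.
rewrite integral_indic_combination //; last by move=> j; exact: minorant_coef_ge0.
under eq_bigr do rewrite (probability_fine P (mE _)) -EFinM.
rewrite sumEFin (sum_minorant_index _ _ _ _ (fun A => fine (P A))) /=.
rewrite probability_setT /= mulr1; congr EFin.
have -> : \sum_(u | u != v) fine (P (leaf_event u `&` center_event)) * c u =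
          center_prob * leaf_mass.
  rewrite /leaf_mass mulr_sumr; apply: eq_bigr => u _.
  by rewrite leaf_center_independent /center_prob; ring.
by rewrite mulrA.
Qed.

Lemma expected_opt_ge_minorant k g be de :
  affine_minorant (\sum_(u | u != v) c u) (c v) k g be de ->
  ((k + g * center_prob + be * leaf_mass + de * center_prob * leaf_mass)%:E
     <= EOPT P (star v) I c W)%E.
Proof.
move=> cert; have [k0 g0 be0 de0 _] := cert.
rewrite -integral_minorant_integrand //; apply: le_integral_nonneg => t; rewrite lee_fin.
- rewrite minorant_integrandE; apply: sumr_ge0 => j _.
  by rewrite mulr_ge0 ?indic_ge0 ?minorant_coef_ge0.
- exact: minorant_integrand_le_opt.
Qed.

Lemma expected_L :
  ((c v)%:E + \sum_(u | u != v) pmand P (star v) I W u * (c u)%:E)%E =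
  (c v + leaf_mass)%:E.
Proof.
rewrite /leaf_mass EFinD -sumEFin; congr (_ + _)%E; apply: eq_bigr => u uv.
by rewrite pmand_leaf // (probability_fine P (measurable_leaf_event u)) EFinM.
Qed.

Lemma expected_R :
  (pmand P (star v) I W v * (c v)%:E + (\sum_(u | u != v) c u)%:E)%E =
  (center_prob * c v + \sum_(u | u != v) c u)%:E.
Proof. by rewrite pmand_center (probability_fine P measurable_center_event). Qed.

End BalancedStar.


Theorem lemmaC1 (R : realType) (d : measure_display) (T : measurableType d)
  (P : probability T R) (V : finType) (v : V)
  (W : V -> T -> R) (a b : V -> \bar R) (c : V -> R)
  (hWm : forall u, measurable_fun setT (W u))
  (hind : mutually_independent P W)
  (hcont : forall u, atomless P (W u))
  (hsupp : forall u, min_support_interval P (W u) (a u) (b u))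
  (hedge : forall u, u != v -> exists x, oint (a u) (b u) x /\ oint (a v) (b v) x)
  (hc : forall u, 0 <= c u) :
  let I := fun u => oint (a u) (b u) in
  let p := pmand P (star v) I W in
  let EL := ((c v)%:E + \sum_(u | u != v) p u * (c u)%:E)%E in
  let ER := (p v * (c v)%:E + (\sum_(u | u != v) c u)%:E)%E in
  EL = ER ->
  (EL <= (4 / 3)%:E * EOPT P (star v) I c W)%E.
Proof.
move=> I p EL ER balanced.
have support u : (a u < b u)%E by case: (hsupp u).
have eL : EL = (c v + leaf_mass P v W a b c)%:E := expected_L P c hWm support hedge.
have eR : ER = (center_prob P v W a b * c v + \sum_(u | u != v) c u)%:E :=
  expected_R P c hWm support hedge.
have balanced_real : c v + leaf_mass P v W a b c =
    center_prob P v W a b * c v + \sum_(u | u != v) c u.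
  by move: balanced; rewrite eL eR => -[].
have [k [g [be [de [cert ratio]]]]] :=
  balanced_star_minorant (sumr_ge0 _ (fun u _ => hc u)) (hc v)
    (center_prob_bounds P v a b hWm) (leaf_mass_ge0 P v a b hWm hc) balanced_real.
have opt_bound := expected_opt_ge_minorant hWm hind support hedge hc cert.
rewrite eL; apply: le_trans (lee_wpmul2l _ opt_bound).
- by rewrite -EFinM lee_fin.
- by rewrite lee_fin; lra.
Qed.
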